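(* Let $\lambda,\mu,\nu\in P^+$ and suppose $(\lambda,\mu,\nu)$ is a low triple in $P^+$. Then there are integers $a,b\ge1$ such that $\{\lambda,\mu\}=\{au,bv\}$. If $\lambda=au$, $\mu=bv$ with $a\ge b$, then $\nu=\nu'+(a-b)u$ for some $\nu'\in\Lambda^+$ with $\nu'\le b\,\omega_\ell$. Moreover, if $\{\lambda,\mu\}=\{u,v\}$ then $\nu=0$.
   Context: Let $\Phi$ be of type $\mathsf{BC}_\ell$ realized in a Euclidean space $E$: the union of root systems of type $\mathsf B_\ell$ and $\mathsf C_\ell$, with basis $\alpha_1,\dots,\alpha_\ell$ the basis of $\mathsf B_\ell$ (Bourbaki numbering), $2\alpha_\ell\in\Phi$, and fundamental weights $\omega_1,\dots,\omega_\ell$ dual to $\alpha_1^\vee,\dots,\alpha_{\ell-1}^\vee,(2\alpha_\ell)^\vee$. Embed $E=E\times 0\subset E\times\mathbb R$ and take two linearly independent vectors $u,v\in (E\times\mathbb R)\setminus(E\times 0)$ with $u+v=\omega_\ell$. Let $\Lambda^+=\sum_{i=1}^\ell\mathbb N\omega_i$, $P^+=\sum_{i=1}^{\ell-1}\mathbb N\omega_i+\mathbb Nu+\mathbb Nv$, and $P$ the lattice generated by $P^+$. Order $P$ by $\mu\le\lambda$ iff $\lambda-\mu\in R^+$, where $R^+$ is the $\mathbb N$-span of $\alpha_1,\dots,\alpha_\ell$. A triple $(\lambda,\mu,\nu)$ in $P^+$ is a low triple if (i) whenever $\lambda',\mu'\in P^+$ with $\lambda'\le\lambda$, $\mu'\le\mu$,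 $\nu\le\lambda'+\mu'$, then $\lambda'=\lambda$ and $\mu'=\mu$; and (ii) $\nu+\sum_{i=1}^\ell\alpha_i\le\lambda+\mu$. *)

From HB Require Import structures.
From mathcomp Require Import all_boot all_order all_algebra.
From mathcomp Require Import reals.
Set Implicit Arguments. Unset Strict Implicit. Unset Printing Implicit Defensive.
Import Order.TTheory GRing.Theory Num.Theory.
Local Open Scope ring_scope.

(* E x R is modelled as 'rV[R]_(l.+1): coordinates 0..l-1 are E = R^l
   (standard basis e_1..e_l, indexed from 1 as in the paper), coordinate l
   is the extra R factor.  E x 0 = vectors with last coordinate 0. *)
Section BC.
Variables (R : realType) (l : nat).

Definition ebasis (i : nat) : 'rV[R]_(l.+1) := \row_(j < l.+1) ((j.+1 == i)%N)%:R.

Definition sroot (i : nat) : 'rV[R]_(l.+1) :=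
  if (i < l)%N then ebasis i - ebasis i.+1 else ebasis l.

(* fundamental weights dual to a_1^v,...,a_{l-1}^v,(2a_l)^v :
   w_i = e_1 + ... + e_i *)
Definition fweight (i : nat) : 'rV[R]_(l.+1) := \sum_(1 <= k < i.+1) ebasis k.

Definition Rplus (x : 'rV[R]_(l.+1)) : Prop :=
  exists c : nat -> nat, x = \sum_(1 <= i < l.+1) (c i)%:R *: sroot i.

Definition Lplus (x : 'rV[R]_(l.+1)) : Prop :=
  exists c : nat -> nat, x = \sum_(1 <= i < l.+1) (c i)%:R *: fweight i.

Definition Pplus (u v x : 'rV[R]_(l.+1)) : Prop :=
  exists (c : nat -> nat) (a b : nat),
    x = \sum_(1 <= i < l) (c i)%:R *: fweight i + a%:R *: u + b%:R *: v.

Definition wle (mu lam : 'rV[R]_(l.+1)) : Prop := Rplus (lam - mu).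

Definition low_triple (u v lam mu nu : 'rV[R]_(l.+1)) : Prop :=
  [/\ Pplus u v lam, Pplus u v mu, Pplus u v nu,
      (forall lam' mu', Pplus u v lam' -> Pplus u v mu' ->
         wle lam' lam -> wle mu' mu -> wle nu (lam' + mu') ->
         lam' = lam /\ mu' = mu)
    & wle (nu + \sum_(1 <= i < l.+1) sroot i) (lam + mu)].

End BC.

From HB Require Import structures.
From mathcomp Require Import all_boot all_order all_algebra.
From mathcomp Require Import reals.
From mathcomp Require Import zify ring lra.
Set Implicit Arguments. Unset Strict Implicit. Unset Printing Implicit Defensive.
Import Order.TTheory GRing.Theory Num.Theory.
Local Open Scope ring_scope.

(* A low triple cannot be lowered: if lam - e_i (1 <= i <= l) were still in P^+,
   the pair (lam - e_i, mu) would contradict minimality, because e_i and e_1 - e_i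
   lie in R^+ and e_1 = a_1 + ... + a_l.  Since w_i - e_i = w_(i-1) and
   u + v - e_l = w_(l-1), the only elements of P^+ that cannot be lowered are the
   multiples of u and of v.  Writing lam + mu = A u + B v and
   nu = sum_k c_k w_k + p u + q v, the vector lam + mu - nu - e_1 lies in R^+, so
   its last coordinate vanishes and its first one is nonnegative.  This gives
   p - q = A - B and q + sum_k c_k < B, from which all three claims follow. *)

Ltac row_ring := apply/rowP => ?; rewrite !mxE; ring.

Lemma sum_nat_indicator (R : pzRingType) (V : lmodType R) m n j (F : nat -> V) :
  (m <= j < n)%N -> \sum_(m <= k < n) (k == j)%:R *: F k = F j.
Proof.
move=> hj; rewrite (bigD1_seq j) ?mem_index_iota ?iota_uniq //= eqxx scale1r.
by rewrite big1 ?addr0 // => k /negbTE ->; rewrite scale0r.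
Qed.

Section Weights.
Variables (R : realType) (l : nat).
Hypothesis hl : (0 < l)%N.
Local Notation vec := 'rV[R]_(l.+1).
Local Notation e := (ebasis R l).
Local Notation alpha := (sroot R l).
Local Notation omega := (fweight R l).

Lemma ebasisE i j : e i 0 j = (j.+1 == i)%:R.
Proof. by rewrite mxE. Qed.

Lemma ebasis_neq0 i : (0 < i <= l)%N -> e i != 0.
Proof.
move=> hi; apply/eqP => /rowP /(_ (inord i.-1)).
rewrite ebasisE mxE inordK ?prednK ?eqxx; try lia.
by move/eqP; rewrite oner_eq0.
Qed.

Lemma ebasis_last i : (i <= l)%N -> e i 0 ord_max = 0.
Proof. by move=> hi; rewrite ebasisE /= (_ : (l.+1 == i) = false) //; lia. Qed.

Lemma sroot_last i : alpha i 0 ord_max = 0.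
Proof.
rewrite /sroot; case: ifP => hi; last by rewrite ebasis_last.
by rewrite [(_ - _ : vec) _ _]mxE [(- _ : vec) _ _]mxE !ebasis_last ?subrr //; lia.
Qed.

Lemma sroot_first_ge0 i : (0 < i)%N -> 0 <= alpha i 0 0.
Proof.
move=> hi; rewrite /sroot; case: ifP => _; rewrite !mxE ?ler0n //=.
by rewrite (_ : (1 == i.+1) = false) ?subr0 ?ler0n //; lia.
Qed.

Lemma fweight0 : omega 0 = 0.
Proof. by rewrite /fweight big_geq. Qed.

Lemma fweightS i : omega i.+1 = omega i + e i.+1.
Proof. by rewrite /fweight big_nat_recr. Qed.

Lemma fweight_subebasis i : (0 < i)%N -> omega i - e i = omega i.-1.
Proof. by case: i => // i _; rewrite fweightS addrK. Qed.

Lemma fweight_last i : (i <= l)%N -> omega i 0 ord_max = 0.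
Proof.
elim: i => [|i IH] hi; first by rewrite fweight0 mxE.
by rewrite fweightS mxE IH ?ebasis_last ?addr0 //; lia.
Qed.

Lemma fweight_first i : (0 < i)%N -> omega i 0 0 = 1.
Proof.
case: i => // i _; elim: i => [|i IH]; rewrite fweightS mxE ?IH ebasisE /=.
  by rewrite fweight0 mxE add0r.
by rewrite addr0.
Qed.

Lemma Rplus0 : Rplus (0 : vec).
Proof. by exists (fun=> 0%N); rewrite big1 // => i _; rewrite scale0r. Qed.

Lemma RplusD (x y : vec) : Rplus x -> Rplus y -> Rplus (x + y).
Proof.
move=> [c ->] [d ->]; exists (fun i => c i + d i)%N.
by rewrite -big_split; apply: eq_bigr => i _; rewrite natrD scalerDl.
Qed.

Lemma Rplus_sroot i : (0 < i <= l)%N -> Rplus (alpha i).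
Proof. by move=> hi; exists (fun k => k == i); rewrite sum_nat_indicator. Qed.

Lemma Rplus_sum_sroot m n :
  (0 < m)%N -> (n <= l.+1)%N -> Rplus (\sum_(m <= k < n) alpha k).
Proof.
move=> hm hn; rewrite big_seq; apply: big_ind; [exact: Rplus0|exact: RplusD|].
by move=> k; rewrite mem_index_iota => hk; apply: Rplus_sroot; lia.
Qed.

Lemma Rplus_last (x : vec) : Rplus x -> x 0 ord_max = 0.
Proof.
by move=> [c ->]; rewrite summxE big1 // => i _; rewrite mxE sroot_last mulr0.
Qed.

Lemma Rplus_first_ge0 (x : vec) : Rplus x -> 0 <= x 0 0.
Proof.
move=> [c ->]; rewrite summxE big_seq sumr_ge0 // => i.
by rewrite mem_index_iota mxE => hi; rewrite mulr_ge0 ?ler0n ?sroot_first_ge0 //; lia.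
Qed.

Lemma sum_sroot_from i : (i <= l)%N -> \sum_(i <= k < l.+1) alpha k = e i.
Proof.
move=> hi; rewrite big_nat_recr //= (@telescope_sumr_eq _ _ _ (fun k => - e k)) //.
  by rewrite /sroot ltnn opprK addrAC addNr add0r.
by move=> k /andP[_ hk]; rewrite /sroot hk opprK addrC.
Qed.

Lemma sum_sroot : \sum_(1 <= k < l.+1) alpha k = e 1.
Proof. exact: sum_sroot_from. Qed.

Lemma Rplus_ebasis i : (0 < i <= l)%N -> Rplus (e i).
Proof. by move=> hi; rewrite -sum_sroot_from; [apply: Rplus_sum_sroot|]; lia. Qed.

Lemma Rplus_ebasis1B i : (0 < i <= l)%N -> Rplus (e 1 - e i).
Proof.
move=> hi; rewrite -sum_sroot (big_cat_nat _ (n := i)) /= ?sum_sroot_from ?addrK;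
  try lia.
by apply: Rplus_sum_sroot; lia.
Qed.

Lemma Lplus_fweight_sum (c : nat -> nat) q :
  Lplus (\sum_(1 <= k < l) (c k)%:R *: omega k + q%:R *: omega l).
Proof.
exists (fun k => if k == l then q else c k); rewrite big_nat_recr //= eqxx.
by congr (_ + _); apply: eq_big_nat => k /andP[_ /ltn_eqF ->].
Qed.

Section LowTriples.
Variables u v : vec.

Lemma low_tripleC lam mu nu : low_triple u v lam mu nu -> low_triple u v mu lam nu.
Proof.
case=> Plam Pmu Pnu Hmin Hsum; split => //; last by rewrite [mu + _]addrC.
move=> mu' lam' Pmu' Plam' le_mu le_lam le_nu.
by have [-> ->] : lam' = lam /\ mu' = mu by apply: Hmin; rewrite // addrC.
Qed.

Lemma low_triple_irreducible {lam mu nu i} :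
  low_triple u v lam mu nu -> (0 < i <= l)%N -> ~ Pplus u v (lam - e i).
Proof.
case=> _ Pmu _ Hmin; rewrite sum_sroot => Hsum hi Plam'.
have [|||/eqP] := Hmin _ mu Plam' Pmu.
- by rewrite /wle subKr; apply: Rplus_ebasis.
- by rewrite /wle subrr; apply: Rplus0.
- rewrite /wle.
  have -> : lam - e i + mu - nu = (lam + mu - (nu + e 1)) + (e 1 - e i) by row_ring.
  by apply: RplusD => //; apply: Rplus_ebasis1B.
by rewrite subr_eq addrC -subr_eq subrr eq_sym (negbTE (ebasis_neq0 hi)).
Qed.

Hypothesis huv : u + v = omega l.

Definition pcomb (c : nat -> nat) (a b : nat) : vec :=
  \sum_(1 <= k < l) (c k)%:R *: omega k + a%:R *: u + b%:R *: v.

Lemma sum_fweight_indicator j : (j < l)%N ->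
  \sum_(1 <= k < l) (k == j)%:R *: omega k = omega j.
Proof.
have [->|j_gt0] := posnP j => hj; last by rewrite sum_nat_indicator //; lia.
by rewrite fweight0 big_nat big1 // => k /andP[/lt0n_neq0/negbTE -> _]; rewrite scale0r.
Qed.

Lemma pcomb_bump (c' c : nat -> nat) a b j :
    (j < l)%N -> (forall k, c' k = c k + (k == j))%N ->
  pcomb c' a b = pcomb c a b + omega j.
Proof.
move=> hj hc; rewrite /pcomb -(sum_fweight_indicator hj).
under eq_bigr do rewrite hc natrD scalerDl.
by rewrite big_split /=; row_ring.
Qed.

Lemma pcombSS c a b : pcomb c a.+1 b.+1 = pcomb c a b + omega l.
Proof. by rewrite /pcomb -huv; row_ring. Qed.

Lemma pcomb_scale c a b : (forall k, (0 < k < l)%N -> c k = 0%N) ->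
  pcomb c a b = a%:R *: u + b%:R *: v.
Proof.
by move=> c0; rewrite /pcomb big_nat big1 ?add0r // => k /c0 ->; rewrite scale0r.
Qed.

Lemma Pplus_pcomb c a b : Pplus u v (pcomb c a b).
Proof. by exists c, a, b. Qed.

Lemma Pplus_irreducible x : Pplus u v x ->
    (forall i, (0 < i <= l)%N -> ~ Pplus u v (x - e i)) ->
  exists a : nat, x = a%:R *: u \/ x = a%:R *: v.
Proof.
case=> c [a [b ->]]; rewrite -/(pcomb c a b) => irr.
have c0 k : (0 < k < l)%N -> c k = 0%N.
  move=> hk; apply/eqP; rewrite -leqn0 leqNgt; apply/negP => ck.
  apply: (irr k); first lia.
  pose c' i := (c i - (i == k))%N.
  rewrite (@pcomb_bump c c' a b k) -1?addrA ?fweight_subebasis; try lia.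
    rewrite -(@pcomb_bump (fun i => c' i + (i == k.-1))%N c' a b k.-1) //; last lia.
    exact: Pplus_pcomb.
  by move=> i; rewrite /c'; case: eqP => [->|] /=; lia.
case: a b irr => [|a] [|b] irr.
- by exists 0%N; left; rewrite pcomb_scale // !scale0r addr0.
- by exists b.+1; right; rewrite pcomb_scale // scale0r add0r.
- by exists a.+1; left; rewrite pcomb_scale // scale0r addr0.
exfalso; apply: (irr l); first lia.
rewrite pcombSS -addrA fweight_subebasis //.
rewrite -(@pcomb_bump (fun i => c i + (i == l.-1))%N c a b l.-1) //; last lia.
exact: Pplus_pcomb.
Qed.

Lemma pcomb_last c a b : pcomb c a b 0 ord_max = (a%:R - b%:R) * u 0 ord_max.
Proof.
have /rowP/(_ ord_max) := huv; rewrite mxE fweight_last // => uv_last.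
have v_last : v 0 ord_max = - u 0 ord_max by lra.
rewrite /pcomb !mxE summxE big_nat big1 ?add0r ?v_last; first by ring.
by move=> k /andP[_ hk]; rewrite mxE fweight_last ?mulr0 //; lia.
Qed.

Lemma pcomb_first c a b :
  pcomb c a b 0 0 = (\sum_(1 <= k < l) c k)%:R + a%:R * u 0 0 + b%:R * (1 - u 0 0).
Proof.
have /rowP/(_ 0) := huv; rewrite mxE fweight_first // => uv_first.
have v_first : v 0 0 = 1 - u 0 0 by lra.
rewrite /pcomb !mxE summxE natr_sum v_first.
congr (_ + _ + _).
by apply: eq_big_nat => k /andP[k_gt0 _]; rewrite mxE fweight_first ?mulr1.
Qed.

Hypothesis hu : u 0 ord_max != 0.

Lemma pcomb_bounds c p q A B :
    wle (pcomb c p q + e 1) (A%:R *: u + B%:R *: v) ->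
  [/\ (p + B = q + A)%N, (q + \sum_(1 <= k < l) c k < B)%N
    & (p + \sum_(1 <= k < l) c k < A)%N].
Proof.
rewrite /wle -(@pcomb_scale (fun=> 0%N) A B) // => le_AB.
(* The entries are expanded by hand so that [mxE] does not unfold [pcomb]. *)
have entryE j : (pcomb (fun=> 0%N) A B - (pcomb c p q + e 1)) 0 j =
    pcomb (fun=> 0%N) A B 0 j - (pcomb c p q 0 j + e 1 0 j).
  rewrite [(_ - _ : vec) _ _]mxE [(- _ : vec) _ _]mxE.
  by rewrite [(pcomb _ _ _ + _ : vec) _ _]mxE.
have := Rplus_last le_AB; have := Rplus_first_ge0 le_AB.
rewrite !entryE !pcomb_last !pcomb_first ebasis_last // ebasisE big1_eq /=.
set C := (\sum_(1 <= k < l) c k)%N; set s := u 0 0 => first_ge0 last0.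
have /eqP : (A%:R - B%:R - p%:R + q%:R) * u 0 ord_max = 0 :> R by lra.
rewrite mulf_eq0 (negbTE hu) orbF => /eqP hpq.
have e_pq : (p + B = q + A)%N by apply/eqP; rewrite -(eqr_nat R) !natrD; apply/eqP; lra.
have lt_qB : (q + C < B)%N by rewrite -(ltr_nat R) natrD; nra.
by split => //; lia.
Qed.

Lemma pcomb_diag c q d :
  pcomb c (q + d) q = \sum_(1 <= k < l) (c k)%:R *: omega k + q%:R *: omega l + d%:R *: u.
Proof. by rewrite /pcomb -huv natrD; row_ring. Qed.

Section Triple.
Variables lam mu nu : vec.
Hypothesis low : low_triple u v lam mu nu.

Lemma low_triple_weights A B : lam + mu = A%:R *: u + B%:R *: v ->
  exists c p q, [/\ nu = pcomb c p q, (p + B = q + A)%N,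
    (q + \sum_(1 <= k < l) c k < B)%N & (p + \sum_(1 <= k < l) c k < A)%N].
Proof.
case: low => _ _ [c [p [q ->]]] _; rewrite sum_sroot -/(pcomb c p q) => + hAB.
by rewrite hAB => /pcomb_bounds [*]; exists c, p, q.
Qed.

Lemma low_triple_shape : exists a b : nat, [/\ (0 < a)%N, (0 < b)%N &
  (lam = a%:R *: u /\ mu = b%:R *: v) \/ (lam = b%:R *: v /\ mu = a%:R *: u)].
Proof.
have pos A B : lam + mu = A%:R *: u + B%:R *: v -> (0 < A)%N /\ (0 < B)%N.
  by move=> /low_triple_weights [c [p [q [_ _ hq hp]]]]; lia.
case: (low) => Plam Pmu _ _ _.
have [a ha] := Pplus_irreducible Plam (fun i => low_triple_irreducible low).
have [b hb] := Pplus_irreducible Pmu (fun i => low_triple_irreducible (low_tripleC low)).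
case: ha hb => ha [] hb; rewrite {}ha {}hb in pos *.
- have [] := pos (a + b)%N 0%N; last by lia.
  by rewrite natrD scalerDl scale0r addr0.
- by have [] // := pos a b; exists a, b; split => //; left.
- have [] := pos b a; first by rewrite addrC.
  by exists b, a; split => //; right.
- have [] := pos 0%N (a + b)%N; last by lia.
  by rewrite natrD scalerDl scale0r add0r.
Qed.

Lemma low_triple_scaled_nu a b : lam = a%:R *: u -> mu = b%:R *: v -> (b <= a)%N ->
  exists nu', [/\ Lplus nu', wle nu' (b%:R *: omega l) & nu = nu' + (a - b)%:R *: u].
Proof.
move=> hlam hmu hba.
have /low_triple_weights[c [p [q [hnu hpq _ _]]]] : lam + mu = a%:R *: u + b%:R *: v.
  by rewrite hlam hmu.
rewrite (_ : p = q + (a - b))%N ?pcomb_diag in hnu; last by lia.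
exists (\sum_(1 <= k < l) (c k)%:R *: omega k + q%:R *: omega l); split => //.
  exact: Lplus_fweight_sum.
case: low => _ _ _ _; rewrite sum_sroot /wle => le_sum.
have -> : b%:R *: omega l - (\sum_(1 <= k < l) (c k)%:R *: omega k + q%:R *: omega l) =
    (lam + mu - (nu + e 1)) + e 1.
  by rewrite hlam hmu hnu -huv natrB //; row_ring.
by apply: RplusD => //; apply: Rplus_ebasis; lia.
Qed.

Lemma low_triple_unit : lam = u -> mu = v -> nu = 0.
Proof.
move=> hlam hmu.
have /low_triple_weights[c [p [q [-> _]]]] : lam + mu = 1%:R *: u + 1%:R *: v.
  by rewrite hlam hmu !scale1r.
rewrite !ltnS !leqn0 !addn_eq0 => /andP[/eqP-> /eqP sum_c0] /andP[/eqP-> _].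
rewrite pcomb_scale ?scale0r ?addr0 // => k hk.
move/eqP: sum_c0; rewrite sum_nat_seq_eq0 => /allP/(_ k).
by rewrite mem_index_iota => /(_ hk)/eqP.
Qed.

End Triple.
End LowTriples.
End Weights.

Theorem mainTheorem6 (R : realType) (l : nat) (hl : (0 < l)%N)
  (u v : 'rV[R]_(l.+1))
  (hu : u 0 ord_max != 0) (hv : v 0 ord_max != 0)
  (huv_indep : forall a b : R, a *: u + b *: v = 0 -> a = 0 /\ b = 0)
  (huv : u + v = fweight R l l)
  (lam mu nu : 'rV[R]_(l.+1))
  (hlow : low_triple u v lam mu nu) :
  (exists a b : nat, [/\ (1 <= a)%N, (1 <= b)%N &
      ((lam = a%:R *: u /\ mu = b%:R *: v) \/ (lam = b%:R *: v /\ mu = a%:R *: u))])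
  /\ (forall a b : nat, lam = a%:R *: u -> mu = b%:R *: v -> (b <= a)%N ->
        exists nu', [/\ Lplus nu', wle nu' (b%:R *: fweight R l l)
                      & nu = nu' + (a - b)%:R *: u])
  /\ ((lam = u /\ mu = v) \/ (lam = v /\ mu = u) -> nu = 0).
Proof.
(* [hv] follows from [hu] and [huv]. *)
split; first exact: (low_triple_shape hl huv hu hlow).
split; first exact: (low_triple_scaled_nu hl huv hu hlow).
case=> -[hlam hmu]; first exact: (low_triple_unit hl huv hu hlow hlam hmu).
exact: (low_triple_unit hl huv hu (low_tripleC hlow) hmu hlam).
Qed.
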